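(* Let $X$ be a nonnegative random variable with $X\in\mathcal{L}^{1/\theta}$ for some $0<\theta\le1$. Then (i) $\lim_{x\to\infty}e^{\varepsilon x^\theta}\mathbb{P}(X>x)=\infty$ for every $\varepsilon>0$; and (ii) $X\in\mathcal{L}^{1/\eta}$ for all $\eta$ with $1\le1/\eta<1/\theta$.
   Context: Class $\mathcal{L}$: nonnegative $Z$ with $\mathbb{P}(Z>x)>0$ for all $x\ge0$ and $\mathbb{P}(Z>x+y)/\mathbb{P}(Z>x)\to1$ as $x\to\infty$ for some (equivalently all) $y>0$. For $p\ge1$, $X\in\mathcal{L}^p$ means $X\ge0$ and $X^{1/p}\in\mathcal{L}$. *)

From HB Require Import structures.
From mathcomp Require Import all_boot all_order all_algebra.
From mathcomp Require Import all_classical all_reals all_analysis.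
Set Implicit Arguments. Unset Strict Implicit. Unset Printing Implicit Defensive.
Import Order.TTheory GRing.Theory Num.Theory.
Import numFieldNormedType.Exports.
Local Open Scope classical_set_scope.
Local Open Scope ring_scope.

Notation lt := (@Order.lt _ _).
Definition tailP (d : measure_display) (T : measurableType d) (R : realType)
  (P : probability T R) (Z : T -> R) (x : R) : R :=
  fine (P [set w | x < Z w]).

Definition long_tailed (d : measure_display) (T : measurableType d) (R : realType)
  (P : probability T R) (Z : T -> R) : Prop :=
  (forall w, 0 <= Z w) /\
  (forall x : R, 0 <= x -> lt (0%E) (P [set w | x < Z w])) /\
  (exists2 y : R, 0 < y &
     (tailP P Z (x + y) / tailP P Z x) @[x --> +oo] --> (1 : R)).

Definition long_tailed_p (d : measure_display) (T : measurableType d) (R : realType)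
  (P : probability T R) (p : R) (X : T -> R) : Prop :=
  (forall w, 0 <= X w) /\ long_tailed P (fun w => X w `^ p^-1).

From HB Require Import structures.
From mathcomp Require Import all_boot all_order all_algebra.
From mathcomp Require Import all_classical all_reals all_analysis.
From mathcomp Require Import ring lra measurable_realfun.
Import Order.TTheory GRing.Theory Num.Theory.
Import numFieldNormedType.Exports.
Local Open Scope classical_set_scope.
Local Open Scope ring_scope.

(* Put Y := X^theta, which is long-tailed, and F := P(Y > .). Since
   F(u + y)/F(u) -> 1, eventually exp(eps (u + y)) F(u + y) exceeds
   exp(eps u) F(u) by a fixed factor e^(eps y/2) > 1, so exp(eps u) F(u) grows
   without bound; substituting u = x^theta gives (i).  For (ii), with
   beta := theta/eta <= 1 the tail of X^eta at x is F(x^beta), and the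
   subadditivity (a + b)^beta <= a^beta + b^beta gives
   x^beta <= (x + c)^beta <= x^beta + y for c := y^(1/beta), so the ratio
   F((x + c)^beta) / F(x^beta) is squeezed between F(u + y)/F(u) and 1. *)

Section PowR.
Context {R : realType}.
Implicit Types p x y : R.

Lemma ltr_powR2r p x y : 0 < p -> 0 <= x -> 0 <= y -> (x `^ p < y `^ p) = (x < y).
Proof.
move=> p_gt0 x_ge0 y_ge0; apply/idP/idP; last by apply: gt0_ltr_powR.
by apply: contraTT; rewrite -!leNgt; apply: ge0_ler_powR; rewrite ?nnegrE // ltW.
Qed.

Lemma powRVK p x : 0 < p -> 0 <= x -> (x `^ p^-1) `^ p = x.
Proof. by move=> p_gt0 x_ge0; rewrite -powRrM mulVf ?gt_eqF // powRr1. Qed.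

Lemma powR_cvgy p : 0 < p -> x `^ p @[x --> +oo] --> +oo.
Proof.
move=> p_gt0; apply/cvgryPge => A; near=> x.
have A_le : A <= Num.max A 0 by rewrite le_max lexx.
have max_ge0 : 0 <= Num.max A 0 by rewrite le_max lexx orbT.
have x_ge : (Num.max A 0) `^ p^-1 <= x.
  by near: x; apply: nbhs_pinfty_ge; exact: num_real.
apply: (le_trans A_le); rewrite -(powRVK _ _ p_gt0 max_ge0).
by apply: ge0_ler_powR; rewrite ?nnegrE ?powR_ge0 // ?(le_trans _ x_ge) ?powR_ge0 // ltW.
Unshelve. all: by end_near. Qed.

Lemma mul_powRB1_le p x y : 0 < p <= 1 -> 0 <= x <= y -> x * y `^ (p - 1) <= x `^ p.
Proof.
move=> /andP[p_gt0 p_le1] /andP[x_ge0 x_le].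
have [->|x_neq0] := eqVneq x 0; first by rewrite mul0r powR_ge0.
have x_gt0 : 0 < x by rewrite lt_neqAle eq_sym x_neq0.
rewrite -(mulr_powRB1 x_ge0 p_gt0) ler_wpM2l // -(opprB 1 p) !powRN.
rewrite lef_pV2 ?posrE ?powR_gt0 ?(lt_le_trans x_gt0) //.
by apply: ge0_ler_powR; rewrite ?nnegrE ?subr_ge0 // ltW // (lt_le_trans x_gt0).
Qed.

Lemma powRD_le p x y : 0 < p <= 1 -> 0 <= x -> 0 <= y ->
  (x + y) `^ p <= x `^ p + y `^ p.
Proof.
move=> p01 x_ge0 y_ge0; have /andP[p_gt0 _] := p01.
have [xy0|xy_neq0] := eqVneq (x + y) 0.
  have [-> ->] : x = 0 /\ y = 0 by split; lra.
  by rewrite addr0 powR0 ?gt_eqF // addr0.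
rewrite -(mulr_powRB1 (addr_ge0 x_ge0 y_ge0) p_gt0) mulrDl.
by apply: lerD; apply: mul_powRB1_le; rewrite // ?x_ge0 ?y_ge0 ?lerDl ?lerDr.
Qed.

End PowR.

Lemma bernoulli_le {R : realDomainType} (n : nat) (q : R) :
  1 <= q -> 1 + n%:R * (q - 1) <= q ^+ n.
Proof.
move=> q_ge1; elim: n => [|n IHn]; first by rewrite mul0r addr0 expr0.
rewrite exprS -nat1r mulrDl mul1r.
have q_ge0 : 0 <= q by lra.
have := ler_wpM2l q_ge0 IHn.
have : 0 <= n%:R * (q - 1) * (q - 1) by rewrite !mulr_ge0 // subr_ge0.
nra.
Qed.

Section ShiftGrowth.
Variables (R : realType) (H : R -> R) (y q M m : R).
Hypotheses (y_gt0 : 0 < y) (q_gt1 : 1 < q) (m_gt0 : 0 < m).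
Hypothesis H_shift : forall u, M <= u -> q * H u <= H (u + y).
Hypothesis H_window : forall u, M <= u < M + y -> m <= H u.

Lemma shift_iter k u : M <= u -> q ^+ k * H u <= H (u + k%:R * y).
Proof.
move=> Mu; elim: k => [|k IHk]; first by rewrite expr0 mul1r mul0r addr0.
have Muk : M <= u + k%:R * y by rewrite -[M]addr0 lerD // mulr_ge0 // ltW.
rewrite -[k.+1]addn1 natrD mulrDl mul1r addrA.
apply: (le_trans _ (H_shift _ Muk)).
by rewrite addn1 exprS -mulrA ler_wpM2l // ltW // (lt_trans ltr01 q_gt1).
Qed.

Lemma shift_lower u : M <= u -> m * (1 + ((u - M) / y - 1) * (q - 1)) <= H u.
Proof.
move=> Mu; set t := (u - M) / y; set k := Num.truncn t.
have t_ge0 : 0 <= t by rewrite divr_ge0 ?subr_ge0 // ltW.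
have /andP[k_le k_gt] := truncn_itv t_ge0; rewrite -/k in k_le k_gt.
have ky_le : k%:R * y <= u - M by rewrite -ler_pdivlMr.
have ky_gt : u - M < k%:R * y + y.
  by move: k_gt; rewrite ltr_pdivrMr // -natr1 mulrDl mul1r.
(* u lies k shifts beyond the point u - k y of the initial window *)
have Hw : m <= H (u - k%:R * y) by apply: H_window; lra.
have := @shift_iter k (u - k%:R * y) ltac:(lra); rewrite subrK => Hu.
have q_pow := bernoulli_le k q (ltW q_gt1).
have kt : t - 1 <= k%:R by move: k_gt; rewrite -natr1; lra.
have lower_pow : m * (1 + (t - 1) * (q - 1)) <= m * q ^+ k.
  rewrite ler_wpM2l ?(ltW m_gt0) //; apply: (le_trans _ q_pow).
  by rewrite lerD2l ler_wpM2r // subr_ge0 ltW.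
have pow_H : m * q ^+ k <= q ^+ k * H (u - k%:R * y).
  by rewrite mulrC ler_wpM2l // exprn_ge0 // ltW // (lt_trans ltr01 q_gt1).
exact: le_trans lower_pow (le_trans pow_H Hu).
Qed.

Lemma shift_growth_cvgy : H x @[x --> +oo] --> +oo.
Proof.
apply/cvgryPge => A; set c := m * (q - 1).
have c_gt0 : 0 < c by rewrite mulr_gt0 // subr_gt0.
near=> u.
have Mu : M <= u by near: u; apply: nbhs_pinfty_ge; exact: num_real.
have Mu' : M + (A / c + 1) * y <= u.
  by near: u; apply: nbhs_pinfty_ge; exact: num_real.
have t_ge : A / c <= (u - M) / y - 1 by rewrite lerBrDr ler_pdivlMr //; lra.
apply: (le_trans _ (shift_lower _ Mu)); set s := (u - M) / y - 1 in t_ge *.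
have := ler_wpM2l (ltW c_gt0) t_ge; rewrite mulrC divfK ?gt_eqF //.
have -> : m * (1 + s * (q - 1)) = m + c * s by rewrite /c; ring.
by move=> A_le; apply: (le_trans A_le); rewrite lerDr ltW.
Unshelve. all: by end_near. Qed.

End ShiftGrowth.

Lemma expR_mul_antitone_cvgy {R : realType} {F : R -> R} {y eps : R} :
  0 < y -> 0 < eps ->
  {homo F : a b /~ a <= b} -> (forall x, 0 <= x -> 0 < F x) ->
  (F (x + y) / F x) @[x --> +oo] --> (1 : R) ->
  expR (eps * x) * F x @[x --> +oo] --> +oo.
Proof.
move=> y_gt0 eps_gt0 F_anti F_gt0 F_ratio.
(* H(u) := exp(eps u) F(u) gains the factor e^a on each shift by y once
   F(u + y)/F(u) > e^-a. *)
set a := eps * y / 2.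
have a_gt0 : 0 < a by rewrite /a divr_gt0 ?mulr_gt0.
have [M [_ HM]] : \forall x \near +oo, 0 <= x /\ expR (- a) < F (x + y) / F x.
  near=> x; split; near: x; first exact: nbhs_pinfty_ge.
  by apply: (cvgr_gt 1 F_ratio); rewrite expR_lt1 oppr_lt0.
have [M1_ge0 _] := HM (M + 1) ltac:(by rewrite ltrDl).
apply: (@shift_growth_cvgy _ _ y (expR a) (M + 1) (F (M + 1 + y))) => //.
- by rewrite expR_gt1.
- by apply: F_gt0; rewrite addr_ge0 // ltW.
- move=> u Mu; have [u_ge0 ratio] := HM u ltac:(lra).
  rewrite ltr_pdivlMr ?F_gt0 // in ratio.
  have eyE : expR (eps * y) = expR a * expR a by rewrite -expRD /a; congr expR; field.
  rewrite mulrDr expRD eyE mulrCA -!mulrA ler_wpM2l ?(ltW (expR_gt0 _)) //.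
  rewrite ler_wpM2l ?(ltW (expR_gt0 _)) //; apply: ltW.
  by rewrite expRN ltr_pdivrMl ?expR_gt0 // in ratio.
- move=> u /andP[Mu uM]; rewrite -[F _]mul1r.
  apply: ler_pM => //.
  + by apply/ltW/F_gt0; rewrite addr_ge0 // ltW.
  + by apply: (le_trans _ (expR_ge1Dx _)); rewrite lerDl mulr_ge0 //; lra.
  + by apply: F_anti; rewrite ltW.
Unshelve. all: by end_near. Qed.

Lemma antitone_ratio_squeeze {R : realType} {F u v : R -> R} {y : R} :
  {homo F : a b /~ a <= b} -> (forall x, 0 <= x -> 0 < F x) ->
  (F (x + y) / F x) @[x --> +oo] --> (1 : R) ->
  u x @[x --> +oo] --> +oo ->
  (\forall x \near +oo, u x <= v x <= u x + y) ->
  (F (v x) / F (u x)) @[x --> +oo] --> (1 : R).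
Proof.
move=> F_anti F_gt0 F_ratio u_cvgy uv.
have u_ge0 : \forall x \near +oo, 0 <= u x by move/cvgryPge : u_cvgy; apply.
apply: (squeeze_cvgr _ (cvg_comp _ _ u_cvgy F_ratio) (cvg_cst _)).
near=> x.
have Fu_gt0 : 0 < F (u x) by apply: F_gt0; near: x.
have /andP[uv_le vu_le] : u x <= v x <= u x + y by near: x.
rewrite /= ler_pM2r ?invr_gt0 // F_anti //= ler_pdivrMr // mul1r F_anti.
Unshelve. all: by end_near. Qed.

Section Tail.
Context {d : measure_display} {T : measurableType d} {R : realType}.
Implicit Types (P : probability T R) (Z : T -> R).

Lemma measurable_gt_set Z a : measurable_fun setT Z -> measurable [set w | a < Z w].
Proof.
move=> mZ; have := mZ measurableT _ (measurable_itv `]a, +oo[).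
by rewrite setTI; congr measurable; apply/seteqP; split=> w /=; rewrite in_itv/= andbT.
Qed.

Lemma tailP_le P Z : measurable_fun setT Z -> {homo tailP P Z : a b /~ a <= b}.
Proof.
move=> mZ a b ab; rewrite /tailP; apply: fine_le; rewrite ?fin_num_measure //;
  try exact: measurable_gt_set.
apply: le_measure; rewrite ?inE; try exact: measurable_gt_set.
by move=> w /= /(le_lt_trans ab).
Qed.

Lemma tailP_gt0 P Z a : measurable_fun setT Z ->
  (0 < P [set w | (a < Z w)%R])%E -> 0 < tailP P Z a.
Proof.
move=> mZ Pa_gt0; rewrite /tailP fine_gt0 // Pa_gt0 ltey_eq fin_num_measure //.
exact: measurable_gt_set.
Qed.

Lemma powR_gt_setE Z p a : 0 < p -> 0 <= a -> (forall w, 0 <= Z w) ->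
  [set w | a `^ p < Z w `^ p] = [set w | a < Z w].
Proof. by move=> p_gt0 a_ge0 Z_ge0; apply/seteqP; split=> w /=; rewrite ltr_powR2r. Qed.

End Tail.

Theorem lemmaA1 (d : measure_display) (T : measurableType d) (R : realType)
  (P : probability T R) (X : {RV P >-> R}) (theta : R) :
  (forall w, 0 <= X w) ->
  0 < theta -> theta <= 1 ->
  long_tailed_p P theta^-1 X ->
  (forall eps : R, 0 < eps ->
     (expR (eps * x `^ theta) * tailP P X x) @[x --> +oo] --> +oo) /\
  (forall eta : R, 1 <= eta^-1 -> eta^-1 < theta^-1 ->
     long_tailed_p P eta^-1 X).
Proof.
move=> X_ge0 theta_gt0 _ [_]; rewrite invrK => -[_ [Y_pos [y y_gt0 F_ratio]]].
set Y := fun w => X w `^ theta; set F := tailP P Y.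
have mY : measurable_fun setT Y :=
  measurableT_comp (measurable_powR theta) (measurable_funP X).
have F_anti : {homo F : a b /~ a <= b} := tailP_le P _ mY.
have F_gt0 x : 0 <= x -> 0 < F x by move=> x_ge0; apply/tailP_gt0/Y_pos.
split=> [eps eps_gt0|eta eta_ge1 eta_lt].
  apply: (cvg_trans _ (cvg_comp _ _ (powR_cvgy _ theta_gt0)
    (expR_mul_antitone_cvgy y_gt0 eps_gt0 F_anti F_gt0 F_ratio))).
  apply: near_eq_cvg; near=> x; have x_ge0 : 0 <= x by near: x; exact: nbhs_pinfty_ge.
  by rewrite /= /F /tailP powR_gt_setE.
have eta_gt0 : 0 < eta by rewrite -invr_gt0 (lt_le_trans ltr01).
have theta_lt : theta < eta by rewrite -ltf_pV2 ?posrE.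
set beta := theta / eta.
have beta01 : 0 < beta <= 1 by rewrite divr_gt0 // ler_pdivrMr // mul1r ltW.
have /andP[beta_gt0 _] := beta01.
have setE x : 0 <= x -> [set w | x < X w `^ eta] = [set w | x `^ beta < Y w].
  move=> x_ge0; rewrite -(powR_gt_setE (fun w => X w `^ eta) _ _ beta_gt0 x_ge0).
    by congr [set w | _ < _]; apply/funext=> w; rewrite /Y -powRrM mulrC divfK ?gt_eqF.
  by move=> w; exact: powR_ge0.
split=> //; rewrite invrK; split; first by move=> w; exact: powR_ge0.
split=> [x x_ge0|]; first by rewrite setE //; apply/Y_pos/powR_ge0.
exists (y `^ beta^-1); first exact: powR_gt0.
apply: (cvg_trans _ (antitone_ratio_squeeze (v := fun x => (x + y `^ beta^-1) `^ beta)
  F_anti F_gt0 F_ratio (powR_cvgy _ beta_gt0) _)).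
- apply: near_eq_cvg; near=> x; have x_ge0 : 0 <= x by near: x; exact: nbhs_pinfty_ge.
  by rewrite /= /tailP !setE // addr_ge0 // powR_ge0.
- near=> x; have x_ge0 : 0 <= x by near: x; exact: nbhs_pinfty_ge.
  apply/andP; split.
  + apply: ge0_ler_powR; rewrite ?nnegrE ?addr_ge0 ?powR_ge0 ?(ltW beta_gt0) //.
    by rewrite lerDl powR_ge0.
  + by rewrite -[X in _ <= _ + X](powRVK _ _ beta_gt0 (ltW y_gt0)) powRD_le ?powR_ge0.
Unshelve. all: by end_near. Qed.
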